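(* Under the hypotheses and notation of the recursion above (birational $\Phi_n$ of $\mathbf{CP}^2$ of degree $n$ with only ordinary fundamental points, equivalent pairs $(\alpha_j,\beta_j,m_j)$, $j=1,\dots,\sigma_1$), let $$\Lambda(\lambda)=\begin{pmatrix}\lambda-n & i^{(-1)}_{\beta_1} & \cdots & i^{(-1)}_{\beta_{\sigma_1}}\\ -i_{\alpha_1} & \lambda^{m_1+1}+i_{\alpha_1\beta_1} & \cdots & i_{\alpha_1\beta_{\sigma_1}}\\ \vdots & \vdots & \ddots & \vdots\\ -i_{\alpha_{\sigma_1}} & i_{\alpha_{\sigma_1}\beta_1} & \cdots & \lambda^{m_{\sigma_1}+1}+i_{\alpha_{\sigma_1}\beta_{\sigma_1}}\end{pmatrix},$$ i.e. the $(1,1)$ entry is $\lambda-n$, the $(1,l+1)$ entry is $i^{(-1)}_{\beta_l}$, the $(j+1,1)$ entry is $-i_{\alpha_j}$, and the $(j+1,l+1)$ entry is $i_{\alpha_j\beta_l}+\delta_{jl}\lambda^{m_j+1}$. Then $\det\Lambda(\lambda)=\lambda^m+\sum_{i=0}^{m-1}a_i\lambda^i$ is a monic polynomial with integer coefficients of degree $m=m_1+\dots+m_{\sigma_1}+\sigma_1+1$, and the degrees $d(k)=\deg\Phi_n^k$ satisfy the autonomous linear difference equation $$d(k+m)+\sum_{i=0}^{m-1}a_i\,d(k+i)=0\qquad(k\ge 0 \text{ sufficiently large for all terms to be defined by the recursion}).$$ Consequently $d(k)=\sum_{i=1}^{l}\lambda_i^k\sum_{j=0}^{s_i-1}c_{ij}k^j$,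 where $\lambda_1,\dots,\lambda_l$ are the distinct roots of $\det\Lambda(\lambda)=0$ with multiplicities $s_1,\dots,s_l$ and the constants $c_{ij}$ are determined by the initial values $d(1),\dots,d(m)$; in particular, if all roots satisfy $|\lambda_i|=1$ then $d(k)$ grows at most polynomially in $k$.
   Context: A birational map $\Phi_n$ of $\mathbf{CP}^2$ is written $z\mapsto z'$, $z'_1:z'_2:z'_3=\phi_1(z):\phi_2(z):\phi_3(z)$, with $\phi_i$ coprime homogeneous polynomials of degree $n$, inverse of the same form; $d(k)=\deg\Phi_n^k$. Fundamental points $O_\alpha$ (multiplicities $i_\alpha$) of $\Phi_n$ and $O^{(-1)}_\beta$ (multiplicities $i^{(-1)}_\beta$) of $\Phi_n^{-1}$, $\alpha,\beta=1,\dots,\sigma$, all assumed ordinary; $i_{\alpha\beta}$ is the multiplicity at $O_\alpha$ of the principal curve $J_\beta$ contracted by $\Phi_n$ to $O^{(-1)}_\beta$. The equivalent pairs are the $\sigma_1$ pairs $(O_{\alpha_j},O^{(-1)}_{\beta_j})$ with $\Phi_n^{-m_j}(O_{\alpha_j})=O^{(-1)}_{\beta_j}$, $m_j\ge 0$, all other fundamental points having backward orbits under $\Phi_n^{-1}$ that never meet $\{O^{(-1)}_\beta\}$. The multiplicities $\gamma_\alpha(k)$ of a general member of the linear system of $\Phi_n^k$ at $O_\alpha$ and $d(k)$ satisfy $d(0)=1$, $d(1)=n$, $\gamma_\alpha(1)=i_\alpha$, $\gamma_\alpha(k)=0$ for $k\le0$, $d(k)=n\,d(k-1)-\sum_{l=1}^{\sigma_1}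 i^{(-1)}_{\beta_l}\gamma_{\alpha_l}(k-m_l-1)$ and $\gamma_{\alpha_j}(k)=i_{\alpha_j}d(k-1)-\sum_{l=1}^{\sigma_1} i_{\alpha_j\beta_l}\gamma_{\alpha_l}(k-m_l-1)$. *)

From HB Require Import structures.
From mathcomp Require Import all_boot all_order all_algebra all_field.
Set Implicit Arguments. Unset Strict Implicit. Unset Printing Implicit Defensive.
Import Order.TTheory GRing.Theory Num.Theory.
Local Open Scope ring_scope.

(* Row/column 0 is the first row/column; row j+1 / column l+1 correspond to
   the equivalent pairs j, l : 'I_sigma1.
   - ii  a      : multiplicity i_a of the fundamental point O_a of Phi_n
   - iinv b     : multiplicity i^{(-1)}_b of O^{(-1)}_b
   - iab a b    : multiplicity i_{ab} at O_a of the principal curve J_b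
   - alpha, beta : the equivalent pairs (O_{alpha_j}, O^{(-1)}_{beta_j})
   - mm j       : the integer m_j *)
Definition Lambda (n sigma sigma1 : nat) (ii iinv : 'I_sigma -> nat)
  (iab : 'I_sigma -> 'I_sigma -> nat) (alpha beta : 'I_sigma1 -> 'I_sigma)
  (mm : 'I_sigma1 -> nat) : 'M[{poly int}]_(sigma1.+1) :=
  \matrix_(r < sigma1.+1, c < sigma1.+1)
    match unlift ord0 r, unlift ord0 c with
    | None, None => 'X - (n%:R)%:P
    | None, Some l => ((iinv (beta l))%:R)%:P
    | Some j, None => - ((ii (alpha j))%:R)%:P
    | Some j, Some l =>
        ((iab (alpha j) (beta l))%:R)%:P + (j == l)%:R * 'X^((mm j).+1)
    end.

Definition degm (sigma1 : nat) (mm : 'I_sigma1 -> nat) : nat :=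
  (\sum_(j < sigma1) (mm j).+1).+1.

From HB Require Import structures.
From mathcomp Require Import all_boot all_order all_algebra all_field.
From mathcomp Require Import fingroup perm ring.
Import Order.TTheory GRing.Theory Num.Theory.
Local Open Scope ring_scope.

(* A polynomial p acts on sequences through the shift S, (S u)(k) = u(k + 1):
   pshift p u = p(S) u.  The recursion for d and for the gamma_{alpha_j} says
   exactly that the matrix Lambda(S) annihilates the vector of sequences
   (d, gamma_{alpha_1}(. - m_1), ..., gamma_{alpha_sigma1}(. - m_sigma1)):
   the first row is the recursion for d, row j+1 the one for gamma_{alpha_j}.
   Multiplying by the adjugate of Lambda (Cramer's rule) shows that
   P = det Lambda annihilates every entry, in particular d; this is the
   announced difference equation.  P is monic of degree m because the
   diagonal entries of Lambda are monic of degrees 1 and m_j + 1 while the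
   off-diagonal entries are constants.

   Over the algebraic numbers P = prod_(z <- rs) (X - z).  Peeling off one
   factor at a time, a first-order equation u(k+1) - z u(k) = v(k) with v a
   quasi-polynomial sum_w w^k f_w(k) is solved by a quasi-polynomial u; the
   polynomial parts are found by inverting g |-> w g(X+1) - z g degree by
   degree.  This yields the closed form of d, and when all roots lie on the
   unit circle every term is O(k^m), so d grows polynomially. *)

Section ShiftAction.
Context {R : comNzRingType}.
Implicit Types (p q : {poly R}) (u v : nat -> R).

Definition pshift p u (k : nat) : R := \sum_(i < size p) p`_i * u (k + i)%N.

Lemma pshift_wide N p u k : (size p <= N)%N ->
  pshift p u k = \sum_(i < N) p`_i * u (k + i)%N.
Proof.
move=> hN; rewrite /pshift (big_ord_widen N (fun i => p`_i * u (k + i)%N) hN).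
rewrite big_mkcond /=; apply: eq_bigr => i _.
by case: ifP => // /negbT; rewrite -leqNgt => h; rewrite nth_default // mul0r.
Qed.

Lemma pshiftD p q u k : pshift (p + q) u k = pshift p u k + pshift q u k.
Proof.
set N := maxn (size p) (size q).
rewrite (@pshift_wide N) ?(leq_trans (size_polyD _ _)) //.
rewrite (@pshift_wide N p) ?leq_maxl // (@pshift_wide N q) ?leq_maxr //.
by rewrite -big_split /=; apply: eq_bigr => i _; rewrite coefD mulrDl.
Qed.

Lemma pshiftZ c p u k : pshift (c *: p) u k = c * pshift p u k.
Proof.
rewrite (@pshift_wide (size p)) ?size_scale_leq // /pshift mulr_sumr.
by apply: eq_bigr => i _; rewrite coefZ mulrA.
Qed.

Lemma pshift0 u k : pshift 0 u k = 0.
Proof. by rewrite /pshift size_poly0 big_ord0. Qed.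

Lemma pshiftB p q u k : pshift (p - q) u k = pshift p u k - pshift q u k.
Proof. by rewrite pshiftD -scaleN1r pshiftZ mulN1r. Qed.

Lemma pshift_sum I (r : seq I) (F : I -> {poly R}) u k :
  pshift (\sum_(i <- r) F i) u k = \sum_(i <- r) pshift (F i) u k.
Proof.
elim: r => [|a r IH]; first by rewrite !big_nil pshift0.
by rewrite !big_cons pshiftD IH.
Qed.

Lemma pshiftC c u k : pshift c%:P u k = c * u k.
Proof. by rewrite (@pshift_wide 1) ?size_polyC_leq1 // big_ord1 coefC addn0. Qed.

Lemma pshiftMX p u k : pshift (p * 'X) u k = pshift p u k.+1.
Proof.
rewrite (@pshift_wide (size p).+1); last first.
  by rewrite (leq_trans (size_polyMleq _ _)) // size_polyX addn2.
rewrite big_ord_recl coefMX /= mul0r add0r /pshift; apply: eq_bigr => i _.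
by rewrite coefMX /= /bump /= add1n addnS.
Qed.

Lemma pshiftXn t u k : pshift 'X^t u k = u (k + t)%N.
Proof.
elim: t k => [|t IH] k; first by rewrite expr0 -polyC1 pshiftC mul1r addn0.
by rewrite exprSr pshiftMX IH addSnnS.
Qed.

Lemma pshiftX u k : pshift 'X u k = u k.+1.
Proof. by rewrite -['X]expr1 pshiftXn addn1. Qed.

Lemma pshift_eq p u v k : u =1 v -> pshift p u k = pshift p v k.
Proof. by move=> huv; apply: eq_bigr => i _; rewrite huv. Qed.

Lemma pshift_sumr I (r : seq I) p (F : I -> nat -> R) k :
  pshift p (fun j => \sum_(i <- r) F i j) k = \sum_(i <- r) pshift p (F i) k.
Proof. by rewrite /pshift exchange_big; apply: eq_bigr => i _; rewrite mulr_sumr. Qed.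

Lemma pshiftM p q u k : pshift (p * q) u k = pshift p (pshift q u) k.
Proof.
elim/poly_ind: p q k => [|p c IH] q k; first by rewrite mul0r !pshift0.
rewrite mulrDl -mulrA pshiftD IH mul_polyC pshiftZ pshiftD pshiftC pshiftMX.
by congr (_ + _); apply: eq_bigr => i _; rewrite [_ * q]mulrC pshiftMX addSn.
Qed.

(* Cramer's rule for operators: if a square matrix of polynomials M(S)
   annihilates a vector of sequences x, then det M(S) annihilates every x_i,
   since det M * 1 = adj M * M. *)
Lemma pshift_det n (M : 'M[{poly R}]_n) (x : 'I_n -> nat -> R) :
  (forall r k, \sum_(c < n) pshift (M r c) (x c) k = 0) ->
  forall i k, pshift (\det M) (x i) k = 0.
Proof.
move=> hMx i k.
have -> : pshift (\det M) (x i) k = \sum_c pshift (((\det M)%:M) i c) (x c) k.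
  rewrite (bigD1 i) //= big1 ?addr0; first by rewrite mxE eqxx mulr1n.
  by move=> c /negbTE hc; rewrite mxE eq_sym hc mulr0n pshift0.
rewrite -mul_adj_mx.
under eq_bigr => c _ do rewrite mxE pshift_sum.
rewrite exchange_big big1 // => r _.
under eq_bigr => c _ do rewrite pshiftM.
rewrite -pshift_sumr (@pshift_eq _ _ (fun _ => 0) _ (hMx r)).
by rewrite /pshift big1 // => j _; rewrite mulr0.
Qed.

End ShiftAction.

Lemma pshift_map {R S : comNzRingType} (phi : {rmorphism R -> S}) (p : {poly R})
    (u : nat -> R) k :
  pshift (map_poly phi p) (phi \o u) k = phi (pshift p u k).
Proof.
have -> : phi (pshift p u k) = \sum_(i < size p) phi (p`_i * u (k + i)%N).
  by rewrite /pshift rmorph_sum.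
rewrite (pshift_wide (size p)); last exact: size_poly.
by apply: eq_bigr => i _; rewrite coef_map rmorphM.
Qed.

(* The determinant of a matrix of polynomials whose diagonal entries are monic
   of positive degrees e_i and whose off-diagonal entries are constants is
   monic of degree sum e_i: the diagonal term dominates all the others. *)
Section MonicDiagonalDet.
Variables (R : idomainType) (n : nat) (M : 'M[{poly R}]_n) (e : 'I_n -> nat).
Hypothesis monic_diag : forall i, M i i \is monic.
Hypothesis size_diag : forall i, size (M i i) = (e i).+1.
Hypothesis e_gt0 : forall i, (0 < e i)%N.
Hypothesis size_offdiag : forall i j, i != j -> (size (M i j) <= 1)%N.

Lemma size_perm_prod (s : {perm 'I_n}) :
  (size (\prod_i M i (s i))%R <= (\sum_(i | s i == i) e i).+1)%N.
Proof.
apply: (leq_trans (size_poly_prod_leq _ _)); rewrite cardT size_enum_ord leq_subLR.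
have -> : (n + (\sum_(i | s i == i) e i).+1 = (\sum_i (e i * (s i == i) + 1)).+1)%N.
  rewrite big_split /= sum1_card cardT size_enum_ord addnS addnC.
  rewrite (big_mkcond (fun i => s i == i)); congr (_ + _).+1.
  by apply: eq_bigr => i _; case: eqP; rewrite ?muln1 ?muln0.
rewrite ltnS; apply: leq_sum => i _; case: eqP => [->|/eqP hsi].
  by rewrite size_diag muln1 addn1.
by rewrite muln0 add0n size_offdiag // eq_sym.
Qed.

(* A permutation other than the identity moves some i, losing e_i > 0. *)
Lemma sum_fixed_lt (s : {perm 'I_n}) : s != 1%g ->
  (\sum_(i | s i == i) e i < \sum_i e i)%N.
Proof.
move=> hs; have [i hi] : exists i, s i != i.
  apply/existsP; apply: contraR hs => /existsPn hfix; apply/eqP/permP => i.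
  by rewrite perm1; apply/eqP; move: (hfix i); rewrite negbK.
rewrite [X in (_ < X)%N](bigID (fun i => s i == i)) /= -[X in (X < _)%N]addn0.
by rewrite ltn_add2l (bigD1 i) //= ltn_addr.
Qed.

Lemma det_monic_diag :
  \det M \is monic /\ size (\det M) = (\sum_i e i).+1.
Proof.
have diag_monic : \prod_i M i i \is monic by apply: monic_prod => i _.
have size_diag_prod : size (\prod_i M i i) = (\sum_i e i).+1.
  rewrite size_prod => [|i _]; last exact: monic_neq0.
  under eq_bigr => i _ do rewrite size_diag -addn1.
  by rewrite big_split /= sum1_card cardT size_enum_ord -addSn addnK.
set rest := \sum_(s : 'S_n | s != 1%g) (-1) ^+ s * \prod_i M i (s i).
have -> : \det M = \prod_i M i i + rest.
  rewrite /determinant (bigD1 1%g) //= odd_perm1 expr0 mul1r.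
  by congr (_ + _); apply: eq_bigr => i _; rewrite perm1.
have size_rest : (size rest < size (\prod_i M i i)%R)%N.
  rewrite size_diag_prod ltnS; apply: (leq_trans (size_sum _ _ _)).
  apply/bigmax_leqP => s hs.
  have -> : size ((-1) ^+ s * \prod_i M i (s i)) = size (\prod_i M i (s i)).
    by case: (odd_perm s); rewrite ?expr1 ?expr0 ?mulN1r ?mul1r ?size_polyN.
  by rewrite -ltnS (leq_ltn_trans (size_perm_prod s)) // ltnS sum_fixed_lt.
split; first by rewrite monicE lead_coefDl // -monicE.
by rewrite size_polyDl.
Qed.

End MonicDiagonalDet.

Section LambdaMatrix.
Context (n : nat) {sigma sigma1 : nat} (ii iinv : 'I_sigma -> nat)
  (iab : 'I_sigma -> 'I_sigma -> nat) (alpha beta : 'I_sigma1 -> 'I_sigma)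
  (mm : 'I_sigma1 -> nat).

Local Notation L := (Lambda n ii iinv iab alpha beta mm).

Definition diag_degree (r : 'I_sigma1.+1) : nat :=
  if unlift ord0 r is Some j then (mm j).+1 else 1%N.

Lemma degm_diag_degree : degm mm = (\sum_r diag_degree r)%N.
Proof.
rewrite big_ord_recl /diag_degree unlift_none add1n.
by congr _.+1; apply: eq_bigr => j _; rewrite liftK.
Qed.

Lemma Lambda_diag r : L r r \is monic /\ size (L r r) = (diag_degree r).+1.
Proof.
rewrite mxE /diag_degree; case: (unliftP ord0 r) => [j _|_].
  by rewrite eqxx mul1r addrC monicXnaddC // size_XnaddC.
by rewrite monicXsubC size_XsubC.
Qed.

Lemma Lambda_offdiag r c : r != c -> (size (L r c) <= 1)%N.
Proof.
rewrite mxE; case: (unliftP ord0 r) => [j ->|->]; case: (unliftP ord0 c) => [l ->|->];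
  rewrite ?liftK ?unlift_none ?eqxx // => hrc.
- have /negbTE -> : j != l by apply: contra hrc => /eqP ->.
  by rewrite mul0r addr0 size_polyC_leq1.
- by rewrite size_polyN size_polyC_leq1.
- by rewrite size_polyC_leq1.
Qed.

Lemma Lambda_det_monic_size : \det L \is monic /\ size (\det L) = (degm mm).+1.
Proof.
rewrite degm_diag_degree; apply: det_monic_diag.
- by move=> r; case: (Lambda_diag r).
- by move=> r; case: (Lambda_diag r).
- by move=> r; rewrite /diag_degree; case: (unlift ord0 r).
- exact: Lambda_offdiag.
Qed.

End LambdaMatrix.

Section DegreeRecursion.
Context {n sigma sigma1 : nat} {ii iinv : 'I_sigma -> nat}
  {iab : 'I_sigma -> 'I_sigma -> nat} {alpha beta : 'I_sigma1 -> 'I_sigma}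
  {mm : 'I_sigma1 -> nat} {d : nat -> int} {gamma : 'I_sigma -> nat -> int}.
Hypothesis hdrec : forall k : nat, (1 <= k)%N ->
     d k = n%:R * d k.-1
           - \sum_(l < sigma1) (iinv (beta l))%:R * gamma (alpha l) (k - (mm l) - 1)%N.
Hypothesis hgrec : forall (j : 'I_sigma1) (k : nat), (1 <= k)%N ->
     gamma (alpha j) k = (ii (alpha j))%:R * d k.-1
           - \sum_(l < sigma1) (iab (alpha j) (beta l))%:R
                                 * gamma (alpha l) (k - (mm l) - 1)%N.

Local Notation L := (Lambda n ii iinv iab alpha beta mm).

Definition unknowns (c : 'I_sigma1.+1) : nat -> int :=
  if unlift ord0 c is Some l then fun k => gamma (alpha l) (k - mm l)%N else d.

Lemma delayed_index k t : (k.+1 - t - 1 = k - t)%N.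
Proof. by rewrite subnAC subn1. Qed.

Lemma Lambda_rows_annihilate r k :
  \sum_c pshift (L r c) (unknowns c) k = 0.
Proof.
rewrite big_ord_recl !mxE /unknowns unlift_none.
under eq_bigr => l _ do rewrite !mxE liftK.
case: (unliftP ord0 r) => [j _|_].
- have delay_term : \sum_l pshift ((j == l)%:R * 'X^((mm j).+1))
      (fun t => gamma (alpha l) (t - mm l)%N) k = gamma (alpha j) k.+1.
    rewrite (bigD1 j) //= big1 => [|l /negbTE hl]; last first.
      by rewrite eq_sym hl mul0r pshift0.
    by rewrite eqxx mul1r pshiftXn addnS -addSn addnK addr0.
  rewrite -scaleN1r pshiftZ pshiftC mulN1r.
  under eq_bigr => l _ do rewrite pshiftD pshiftC.
  rewrite big_split /= delay_term hgrec //=.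
  under [X in _ - X]eq_bigr => l _ do rewrite delayed_index.
  by rewrite addrCA addKr addrN.
- rewrite pshiftB pshiftX pshiftC.
  under eq_bigr => l _ do rewrite pshiftC.
  under eq_bigr => l _ do rewrite -delayed_index.
  by rewrite hdrec //= [X in X + _]addrAC subrr add0r addNr.
Qed.

Lemma Lambda_det_annihilates k : pshift (\det L) d k = 0.
Proof.
have := @pshift_det _ _ _ _ Lambda_rows_annihilate ord0 k.
by rewrite /unknowns unlift_none.
Qed.

End DegreeRecursion.

Lemma size_cancel_top {F : fieldType} {p q : {poly F}} {s : nat} :
  (size p <= s.+1)%N -> (size q <= s.+1)%N -> q`_s != 0 ->
  (size (p - (p`_s / q`_s) *: q)%R <= s)%N.
Proof.
move=> hp hq hqs; apply/leq_sizeP => j hj; rewrite coefB coefZ.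
case: (ltngtP s j) hj => // [hsj _|<- _]; last by rewrite divfK // subrr.
by rewrite (leq_sizeP _ _ hp j hsj) (leq_sizeP _ _ hq j hsj) mulr0 subr0.
Qed.

Lemma coef_XaddC1_exp (R : nzRingType) t j :
  ((('X + 1) ^+ t : {poly R}))`_j = ('C(t, j))%:R.
Proof.
elim: t j => [|t IH] j; first by rewrite expr0 coef1 bin0n; case: (j == 0%N).
rewrite exprSr mulrDr mulr1 coefD coefMX !IH; case: j => [|j] /=.
  by rewrite add0r !bin0.
by rewrite binS natrD addrC.
Qed.

Section BinomialRest.
Variable R : nzRingType.

Definition binom_rest t : {poly R} := ('X + 1) ^+ t - 'X^t.

Lemma size_binom_rest t : (size (binom_rest t) <= t)%N.
Proof.
apply/leq_sizeP => j htj; rewrite coefB coef_XaddC1_exp coefXn.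
case: (ltngtP t j) htj => // [htj _|<- _]; last by rewrite binn subrr.
by rewrite bin_small // subrr.
Qed.

Lemma coef_binom_rest t : (binom_rest t.+1)`_t = t.+1%:R.
Proof.
by rewrite coefB coef_XaddC1_exp coefXn binSn (ltn_eqF (ltnSn t)) subr0.
Qed.

End BinomialRest.

Section QuasiDifference.
Variables (w z : algC).

(* The operator g |-> w g(X+1) - z g encodes on polynomial parts the
   first-order difference (S - z) applied to k |-> w^k g(k). *)
Definition qdiff (g : {poly algC}) : {poly algC} :=
  w *: (g \Po ('X + 1)) - z *: g.

Lemma qdiff_horner g k :
  w ^+ k.+1 * g.[k.+1%:R] - z * (w ^+ k * g.[k%:R]) = w ^+ k * (qdiff g).[k%:R].
Proof.
rewrite /qdiff hornerD hornerN !hornerZ horner_comp hornerD hornerX -polyC1.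
by rewrite hornerC -natr1 exprS mulrBr !mulrA [w * _]mulrC [z * _]mulrC.
Qed.

Lemma qdiffD g h : qdiff (g + h) = qdiff g + qdiff h.
Proof. by rewrite /qdiff comp_polyD !scalerDr opprD addrACA. Qed.

Lemma qdiffZ c g : qdiff (c *: g) = c *: qdiff g.
Proof. by rewrite /qdiff comp_polyZ scalerBr !scalerA mulrC [z * c]mulrC. Qed.

Lemma qdiff_Xn t : qdiff 'X^t = (w - z) *: 'X^t + w *: binom_rest _ t.
Proof.
by rewrite /qdiff comp_Xn_poly /binom_rest scalerBl scalerBr [RHS]addrC [RHS]addrA subrK.
Qed.

Hypothesis w_neq0 : w != 0.

Lemma qdiff_Xn_top s :
  (size (qdiff 'X^(s + (w == z))%R) <= s.+1)%N /\ (qdiff 'X^(s + (w == z)))`_s != 0.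
Proof.
have size_rest t : (size (w *: binom_rest algC t) <= t)%N.
  exact: leq_trans (size_scale_leq _ _) (size_binom_rest _ t).
case: eqVneq => [wz|wz]; rewrite qdiff_Xn.
  rewrite addn1 -wz subrr scale0r add0r coefZ coef_binom_rest mulf_neq0 ?pnatr_eq0 //.
rewrite addn0 coefD !coefZ coefXn eqxx mulr1 (leq_sizeP _ _ (size_binom_rest _ s)) //.
rewrite mulr0 addr0 subr_eq0 wz; split=> //.
rewrite (leq_trans (size_polyD _ _)) // geq_max (leqW (size_rest s)) andbT.
by rewrite (leq_trans (size_scale_leq _ _)) // size_polyXn.
Qed.

Lemma qdiff_onto s (h : {poly algC}) : (size h <= s)%N ->
  {g : {poly algC} | (size g <= s + (w == z))%N /\ qdiff g = h}.
Proof.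
elim: s h => [|s IH] h hs.
  exists 0; split; first by rewrite size_poly0.
  move: hs; rewrite leqn0 size_poly_eq0 => /eqP ->.
  by rewrite /qdiff comp_poly0 !scaler0 subrr.
set q := qdiff 'X^(s + (w == z)); have [size_q q_top] := qdiff_Xn_top s.
set c := h`_s / q`_s.
have [g [size_g qdiff_g]] := IH _ (size_cancel_top hs size_q q_top).
exists (c *: 'X^(s + (w == z)) + g); split; last by rewrite qdiffD qdiffZ qdiff_g addrC subrK.
rewrite (leq_trans (size_polyD _ _)) // geq_max addSn (leq_trans size_g) //.
by rewrite (leq_trans (size_scale_leq _ _)) // size_polyXn.
Qed.

End QuasiDifference.

Lemma quasi_antidifference (w z : algC) {h : {poly algC}} : (w = 0 -> h = 0) ->
  {g : {poly algC} | [/\ (size g <= size h + (w == z))%N, (w = 0 -> g = 0) &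
    forall k, w ^+ k.+1 * g.[k.+1%:R] - z * (w ^+ k * g.[k%:R]) = w ^+ k * h.[k%:R]]}.
Proof.
move=> h0; case: (eqVneq w 0) => [w0|wn0].
  exists 0; split=> [||k]; rewrite ?size_poly0 //.
  by rewrite h0 // !horner0 !mulr0 subrr.
have [g [size_g qdiff_g]] := qdiff_onto _ z wn0 _ h (leqnn (size h)).
exists g; split=> // [w0|k]; first by rewrite w0 eqxx in wn0.
by rewrite qdiff_horner qdiff_g.
Qed.

Definition qpsum (s : seq algC) (f : algC -> {poly algC}) (k : nat) : algC :=
  \sum_(w <- s) w ^+ k * (f w).[k%:R].

Lemma qpsum_undup_cons z rs (f : algC -> {poly algC}) :
  (forall w, size (f w) <= count_mem w rs)%N ->
  qpsum (undup (z :: rs)) f =1 qpsum (undup rs) f.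
Proof.
move=> size_f k /=; case: ifPn => // /count_memPn z_notin.
have /eqP fz : f z == 0 by rewrite -size_poly_eq0 -leqn0 -z_notin.
by rewrite /qpsum big_cons fz horner0 mulr0 add0r.
Qed.

Lemma qpsum_bump s (f : algC -> {poly algC}) z C k : uniq s -> z \in s ->
  qpsum s (fun w => f w + (C *+ (w == z))%:P) k = qpsum s f k + z ^+ k * C.
Proof.
move=> s_uniq zs; rewrite /qpsum.
under eq_bigr => w _ do rewrite hornerD hornerC mulrDr.
rewrite big_split /=; congr (_ + _).
rewrite (bigD1_seq z) //= eqxx mulr1n big1 ?addr0 // => w /negbTE ->.
by rewrite mulr0n mulr0.
Qed.

Lemma geometric_tail {F : fieldType} {z : F} {e : nat -> F} {N : nat} :
  (forall k, (N <= k)%N -> e k.+1 = z * e k) ->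
  exists C, (z = 0 -> C = 0) /\ forall k, (N < k)%N -> e k = z ^+ k * C.
Proof.
move=> e_rec.
have e_pow i : e (N + i)%N = z ^+ i * e N.
  elim: i => [|i IH]; first by rewrite addn0 expr0 mul1r.
  by rewrite addnS e_rec ?leq_addr // IH exprS mulrA.
case: (eqVneq z 0) => [z0|zn0].
  exists 0; split=> // k hk; rewrite mulr0 -(subnKC (ltnW hk)) e_pow z0.
  by rewrite expr0n subn_eq0 leqNgt hk mul0r.
exists (e N / z ^+ N); split=> [z0|k hk]; first by rewrite z0 eqxx in zn0.
rewrite -(subnKC (ltnW hk)) e_pow exprD [RHS]mulrC [RHS]mulrA divfK ?expf_neq0 //.
by rewrite mulrC.
Qed.

(* The polynomial part at frequency w has size at most the
   multiplicity of w, and the part at frequency 0 is kept zero (the term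
   0^k f_0(k) would not survive the shift). *)
Lemma first_order_step z rs (u v : nat -> algC) (f : algC -> {poly algC}) :
  (forall w, size (f w) <= count_mem w rs)%N -> f 0 = 0 ->
  (forall k, (size rs <= k)%N -> v k = qpsum (undup rs) f k) ->
  (forall k, u k.+1 - z * u k = v k) ->
  exists g : algC -> {poly algC},
    [/\ forall w, (size (g w) <= count_mem w (z :: rs))%N, g 0 = 0 &
    forall k, (size rs < k)%N -> u k = qpsum (undup (z :: rs)) g k].
Proof.
move=> size_f f0 hv hu.
have f_zero w : w = 0 -> f w = 0 by move->.
have [g0 g0P] := all_sig (fun w => quasi_antidifference w z (f_zero w)).
pose y := qpsum (undup (z :: rs)) g0.
have y_rec k : (size rs <= k)%N -> y k.+1 - z * y k = v k.
  move=> hk; rewrite hv // -(qpsum_undup_cons z _ _ size_f) /y /qpsum mulr_sumr -sumrB.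
  by apply: eq_bigr => w _; have [_ _ ->] := g0P w.
pose e k := u k - y k.
have e_rec k : (size rs <= k)%N -> e k.+1 = z * e k.
  move=> hk; apply/eqP; rewrite -subr_eq0.
  have -> : e k.+1 - z * e k = (u k.+1 - z * u k) - (y k.+1 - z * y k) by rewrite /e; ring.
  by rewrite hu y_rec // subrr.
have [C [C0 e_tail]] := geometric_tail e_rec.
exists (fun w => g0 w + (C *+ (w == z))%:P); split.
- move=> w; have [size_g0 _ _] := g0P w.
  have -> : count_mem w (z :: rs) = (count_mem w rs + (w == z))%N by rewrite /= eq_sym addnC.
  rewrite (leq_trans (size_polyD _ _)) // geq_max (leq_trans size_g0) ?leq_add2r //.
  by case: eqP => _; rewrite ?mulr0n ?size_poly0 // (leq_trans (size_polyC_leq1 _)) ?leq_addl.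
- have [_ -> // _] := g0P 0.
  by case: eqP => [/esym/C0 ->|_]; rewrite ?mul0rn ?mulr0n polyC0 addr0.
- move=> k hk; rewrite qpsum_bump ?undup_uniq ?mem_undup ?mem_head // -e_tail //.
  by rewrite /e addrC subrK.
Qed.

Lemma linrec_solution {rs : seq algC} {u : nat -> algC} :
  (forall k, pshift (\prod_(z <- rs) ('X - z%:P)) u k = 0) ->
  exists f : algC -> {poly algC},
    [/\ forall w, (size (f w) <= count_mem w rs)%N, f 0 = 0 &
        forall k, (size rs <= k)%N -> u k = qpsum (undup rs) f k].
Proof.
elim: rs u => [|z rs IH] u hu.
  exists (fun=> 0); split=> // [w|k _]; first by rewrite size_poly0.
  by rewrite /qpsum big_nil; move: (hu k); rewrite big_nil -polyC1 pshiftC mul1r.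
pose v k := u k.+1 - z * u k.
have hv k : pshift (\prod_(z <- rs) ('X - z%:P)) v k = 0.
  rewrite -(hu k) big_cons mulrC pshiftM; apply: pshift_eq => j.
  by rewrite pshiftB pshiftX pshiftC.
have [f [size_f f0 hf]] := IH v hv.
exact: first_order_step size_f f0 hf (fun k => erefl).
Qed.

Lemma qpsum_unit_bound {s : seq algC} {f : algC -> {poly algC}} {e : nat} :
  (forall w, w \in s -> `|w| = 1) -> (forall w, (size (f w) <= e)%N) ->
  exists B : nat, forall k, `|qpsum s f k| <= B%:R * k.+1%:R ^+ e.
Proof.
move=> unit_s size_f.
set B := \sum_(w <- s) \sum_(j < e) `|(f w)`_j|.
have B_ge0 : 0 <= B by do 2!apply: sumr_ge0 => ? _; apply: normr_ge0.
exists (Num.bound B) => k; apply: (le_trans _ (ler_wpM2r _ (ltW (archi_boundP B_ge0)))).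
  apply: (le_trans (ler_norm_sum _ _ _)); rewrite /B mulr_suml big_seq [X in _ <= X]big_seq.
  apply: ler_sum => w ws; rewrite normrM normrX unit_s // expr1n mul1r.
  rewrite (horner_coef_wide _ (size_f w)) mulr_suml.
  apply: (le_trans (ler_norm_sum _ _ _)); apply: ler_sum => j _.
  rewrite normrM normrX normr_nat ler_wpM2l ?normr_ge0 //.
  rewrite -!natrX ler_nat (@leq_trans (k.+1 ^ j)) ?(leq_pexp2l _ (ltnW (ltn_ord j))) //.
  by case: (nat_of_ord j) => [|j']; rewrite ?expn0 ?leq_exp2r.
by rewrite exprn_ge0 ?ler0n.
Qed.

Lemma int_poly_growth {d : nat -> int} {m e B : nat} :
  (forall k, (m <= k)%N -> `|(d k)%:~R : algC| <= B%:R * k.+1%:R ^+ e) ->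
  exists C : nat, forall k, `|d k| <= (C * k.+1 ^ e)%:R.
Proof.
move=> tail_bound; set D := (\sum_(i < m) `|d i|%N)%N.
exists (B + D)%N => k; case: (ltnP k m) => hk.
  rewrite natz -abszE lez_nat (@leq_trans (B + D)) ?leq_pmulr ?expn_gt0 //.
  by rewrite (@leq_trans D) ?leq_addl // /D (bigD1 (Ordinal hk)) //= leq_addr.
rewrite -(ler_int algC) intr_norm natz (le_trans (tail_bound k hk)) //.
rewrite -[X in _ <= X]/(((B + D) * k.+1 ^ e)%N%:R : algC) natrM natrX.
by rewrite ler_wpM2r ?exprn_ge0 ?ler0n // ler_nat leq_addr.
Qed.

Lemma int_linrec_solution {p : {poly int}} {d : nat -> int} {rs : seq algC} :
  (forall k, pshift p d k = 0) -> map_poly intr p = \prod_(z <- rs) ('X - z%:P) ->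
  exists f : algC -> {poly algC},
    [/\ forall w, (size (f w) <= count_mem w rs)%N, size rs = (size p).-1 &
        forall k, (size rs <= k)%N -> (d k)%:~R = qpsum (undup rs) f k].
Proof.
move=> p_rec p_roots.
have size_rs : size rs = (size p).-1.
  have := congr1 (fun q : {poly algC} => size q) p_roots.
  rewrite size_prod_XsubC size_map_inj_poly ?mulr0z //; last exact: intr_inj.
  by move->.
have dC_rec k : pshift (\prod_(z <- rs) ('X - z%:P)) (intr \o d) k = 0.
  by rewrite -p_roots pshift_map p_rec rmorph0.
have [f [size_f _ hf]] := linrec_solution dC_rec.
by exists f.
Qed.

Lemma int_linrec_unit_growth {p : {poly int}} {d : nat -> int} :
  p \is monic -> (forall k, pshift p d k = 0) ->
  (forall z : algC, root (map_poly intr p) z -> `|z| = 1) ->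
  exists C e : nat, forall k, `|d k| <= (C * k.+1 ^ e)%:R.
Proof.
move=> p_monic p_rec unit_roots.
have [rs p_roots] := closed_field_poly_normal (map_poly intr p : {poly algC}).
rewrite (monicP (monic_map intr p_monic)) scale1r in p_roots.
have [f [size_f _ hf]] := int_linrec_solution p_rec p_roots.
have unit_rs w : w \in undup rs -> `|w| = 1.
  by rewrite mem_undup => w_rs; apply: unit_roots; rewrite p_roots root_prod_XsubC.
have size_f_rs w : (size (f w) <= size rs)%N := leq_trans (size_f w) (count_size _ _).
have [B hB] := qpsum_unit_bound unit_rs size_f_rs.
have [C hC] : exists C : nat, forall k, `|d k| <= (C * k.+1 ^ size rs)%:R.
  by apply: (int_poly_growth (m := size rs) (B := B)) => k hk; rewrite hf //; apply: hB.
by exists C, (size rs).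
Qed.

Theorem theorem1
  (n sigma sigma1 : nat) (ii iinv : 'I_sigma -> nat)
  (iab : 'I_sigma -> 'I_sigma -> nat) (alpha beta : 'I_sigma1 -> 'I_sigma)
  (mm : 'I_sigma1 -> nat)
  (d : nat -> int) (gamma : 'I_sigma -> nat -> int)
  (hd0 : d 0%N = 1) (hd1 : d 1%N = n%:R)
  (hg0 : forall a, gamma a 0%N = 0)
  (hg1 : forall a, gamma a 1%N = (ii a)%:R)
  (hdrec : forall k : nat, (1 <= k)%N ->
     d k = n%:R * d k.-1
           - \sum_(l < sigma1) (iinv (beta l))%:R * gamma (alpha l) (k - (mm l) - 1)%N)
  (hgrec : forall (j : 'I_sigma1) (k : nat), (1 <= k)%N ->
     gamma (alpha j) k = (ii (alpha j))%:R * d k.-1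
           - \sum_(l < sigma1) (iab (alpha j) (beta l))%:R
                                 * gamma (alpha l) (k - (mm l) - 1)%N) :
  let P := \det (Lambda n ii iinv iab alpha beta mm) in
  let m := degm mm in
  [/\ P \is monic,
      size P = m.+1,
      (forall k : nat, \sum_(i < m.+1) P`_i * d (k + i)%N = 0),
      (forall rs : seq algC,
         map_poly intr P = \prod_(z <- rs) ('X - z%:P) ->
         exists c : algC -> nat -> algC,
           forall k : nat, (m <= k)%N ->
             (d k)%:~R = \sum_(z <- undup rs)
                           z ^+ k * \sum_(j < count_mem z rs) c z j * (k%:R) ^+ j)
    & ((forall z : algC, root (map_poly intr P) z -> `|z| = 1) ->
       exists C e : nat, forall k : nat, `|d k| <= (C * k.+1 ^ e)%:R)].
Proof.
move=> P m.
have [P_monic size_P] : P \is monic /\ size P = m.+1 :=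
  Lambda_det_monic_size n ii iinv iab alpha beta mm.
have P_rec k : pshift P d k = 0 := Lambda_det_annihilates hdrec hgrec k.
split=> //.
- by move=> k; rewrite -size_P; apply: P_rec.
- move=> rs P_roots; have [f [size_f size_rs hf]] := int_linrec_solution P_rec P_roots.
  exists (fun z j => (f z)`_j) => k hk; rewrite hf ?size_rs ?size_P //.
  by apply: eq_bigr => w _; rewrite (horner_coef_wide _ (size_f w)).
- exact: int_linrec_unit_growth P_monic P_rec.
Qed.
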